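(* Let $\Bbbk$ be a field with $\operatorname{char}\Bbbk\neq 2$, and let $H_4^{(-)}$ be the Lie algebra defined in the context, with basis $1,g,e,f$. Let $L$ be a three-dimensional non-abelian Lie subalgebra of $H_4^{(-)}$. Then $L=\operatorname{span}(\alpha 1+g,e,f)$ for some $\alpha\in\Bbbk$, or $L=\operatorname{span}(1,g+\gamma e,f)$ for some $\gamma\in\Bbbk$, or $L=\operatorname{span}(1,g+\gamma f,e)$ for some $\gamma\in\Bbbk$. If moreover $L$ is an ideal of $H_4^{(-)}$, then $L=I:=\Bbbk 1+\Bbbk e+\Bbbk f$ or $L=J_\alpha:=\Bbbk(\alpha 1+g)+\Bbbk e+\Bbbk f$ for some $\alpha\in\Bbbk$.
   Context: $H_4$ is the Sweedler algebra over $\Bbbk$: the 4-dimensional associative unital algebra generated by $g,x$ with relations $g^2=1$, $x^2=0$, $xg=-gx$, with basis $1,g,x,gx$. $H_4^{(-)}$ is the Lie algebra on the vector space $H_4$ with bracket $[a,b]=ab-ba$. Put $e=x+gx$ and $f=x-gx$; then $1,g,e,f$ is a basis of $H_4$ and $[1,g]=[1,e]=[1,f]=0$, $[g,e]=2e$, $[g,f]=-2f$, $[e,f]=0$. *)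

From HB Require Import structures.
From mathcomp Require Import all_boot all_order all_algebra.
Set Implicit Arguments. Unset Strict Implicit. Unset Printing Implicit Defensive.
Import GRing.Theory.
Local Open Scope ring_scope.

(* The Sweedler algebra H_4 over a field K, realized on the coordinate space
   'rV[K]_4 with respect to the basis (1, g, x, gx): the vector v stands for
   v_0 * 1 + v_1 * g + v_2 * x + v_3 * gx. *)
Definition H4 (K : fieldType) := 'rV[K]_4.

Definition h4 (K : fieldType) (a b c d : K) : H4 K :=
  \row_(i < 4) nth 0 [:: a; b; c; d] i.

(* Multiplication of H_4: determined by g^2 = 1, x^2 = 0, xg = -gx, i.e.
   g*g = 1, g*x = gx, x*g = -gx, g*gx = x, gx*g = -x, and all products of
   two elements from {x, gx} vanish. *)
Definition h4mul (K : fieldType) (u v : H4 K) : H4 K :=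
  let a0 := u 0 0 in let a1 := u 0 1 in let a2 := u 0 2 in let a3 := u 0 3 in
  let b0 := v 0 0 in let b1 := v 0 1 in let b2 := v 0 2 in let b3 := v 0 3 in
  h4 (a0 * b0 + a1 * b1)
     (a0 * b1 + a1 * b0)
     (a0 * b2 + a2 * b0 + a1 * b3 - a3 * b1)
     (a0 * b3 + a3 * b0 + a1 * b2 - a2 * b1).

Definition h4one (K : fieldType) : H4 K := h4 1 0 0 0.
Definition h4g   (K : fieldType) : H4 K := h4 0 1 0 0.
Definition h4x   (K : fieldType) : H4 K := h4 0 0 1 0.
Definition h4gx  (K : fieldType) : H4 K := h4 0 0 0 1.

Definition h4e (K : fieldType) : H4 K := h4x K + h4gx K.
Definition h4f (K : fieldType) : H4 K := h4x K - h4gx K.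

Definition h4br (K : fieldType) (u v : H4 K) : H4 K := h4mul u v - h4mul v u.

Definition lie_subalg (K : fieldType) (L : {vspace H4 K}) : Prop :=
  forall u v, u \in L -> v \in L -> h4br u v \in L.

Definition non_abelian (K : fieldType) (L : {vspace H4 K}) : Prop :=
  exists u v, [/\ u \in L, v \in L & h4br u v != 0].

Definition lie_ideal (K : fieldType) (L : {vspace H4 K}) : Prop :=
  forall u v, u \in L -> h4br v u \in L.

Definition span3 (K : fieldType) (a b c : H4 K) : {vspace H4 K} :=
  <<[:: a; b; c]>>%VS.

From HB Require Import structures.
From mathcomp Require Import all_boot all_order all_algebra.
From mathcomp Require Import ring.
Import GRing.Theory.
Set Implicit Arguments. Unset Strict Implicit. Unset Printing Implicit Defensive.
Local Open Scope ring_scope.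

(* Write u = a 1 + b g + c e + d f.  The bracket only involves b and the
   (e, f)-coordinates: [u, u'] = 2 (b c' - c b') e - 2 (b d' - d b') f.  So a
   non-abelian L contains some w = a 1 + g + c e + d f, and L = K w + L_0 with
   L_0 = L ∩ span(1, e, f).  On span(1, e, f), ad w kills 1 and acts by 2 and
   -2 on e and f; as char K <> 2, L_0 is spanned by those of 1, e, f that lie
   in L.  Since dim L = 3, exactly two of them do, which gives the three normal
   forms.  An ideal containing w also contains [e, w] = -2 e and [f, w] = 2 f,
   which leaves only the first. *)

Section SpanFacts.
Variables (F : fieldType) (vT : vectType F).
Implicit Types (x y : vT) (X : seq vT) (U : {vspace vT}).

Lemma memv_span_comb2 X x y (k1 k2 : F) :
  x \in X -> y \in X -> k1 *: x + k2 *: y \in <<X>>%VS.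
Proof. by move=> xX yX; rewrite memvD ?memvZ ?memv_span. Qed.

Lemma span_cons_addr x y X : y \in <<X>>%VS -> <<(x + y)%R :: X>>%VS = <<x :: X>>%VS.
Proof.
move=> yX; apply/eqP; rewrite !span_cons eqEsubv !subv_add !addvSr -!memvE !andbT.
apply/andP; split; first exact: memv_add (memv_line x) yX.
by rewrite -{1}(addrK y x); apply: memv_add; rewrite ?memv_line ?memvN.
Qed.

Lemma scale_mem_span_filter U X x (k : F) :
  x \in X -> k *: x \in U -> k *: x \in <<[seq y <- X | y \in U]>>%VS.
Proof.
move=> xX kxU; have [xU | xU] := boolP (x \in U).
  by rewrite memvZ // memv_span // mem_filter xU.
suff -> : k = 0 by rewrite scale0r mem0v.
apply: contraNeq xU => k_neq0.
by rewrite -(scalerK k_neq0 x) memvZ.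
Qed.

End SpanFacts.

Section Coordinates.
Variable K : fieldType.
Implicit Types a b c d k : K.

Lemma h4_eta (v : H4 K) : v = h4 (v 0 0) (v 0 1) (v 0 2) (v 0 3).
Proof.
apply/rowP => -[[|[|[|[|i]]]] lti] //; rewrite mxE /=; congr (v 0 _); exact: val_inj.
Qed.

Lemma h4_coord0 a b c d : h4 a b c d 0 0 = a. Proof. by rewrite mxE. Qed.
Lemma h4_coord1 a b c d : h4 a b c d 0 1 = b. Proof. by rewrite mxE. Qed.
Lemma h4_coord2 a b c d : h4 a b c d 0 2 = c. Proof. by rewrite mxE. Qed.
Lemma h4_coord3 a b c d : h4 a b c d 0 3 = d. Proof. by rewrite mxE. Qed.

Lemma h4D a b c d a' b' c' d' :
  h4 a b c d + h4 a' b' c' d' = h4 (a + a') (b + b') (c + c') (d + d').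
Proof. by apply/rowP => -[[|[|[|[|i]]]] lti]; rewrite !mxE //= addr0. Qed.

Lemma h4N a b c d : - h4 a b c d = h4 (- a) (- b) (- c) (- d).
Proof. by apply/rowP => -[[|[|[|[|i]]]] lti]; rewrite !mxE //= oppr0. Qed.

Lemma h4Z k a b c d : k *: h4 a b c d = h4 (k * a) (k * b) (k * c) (k * d).
Proof. by apply/rowP => -[[|[|[|[|i]]]] lti]; rewrite !mxE //= mulr0. Qed.

Lemma h4br_h4 a b c d a' b' c' d' :
  h4br (h4 a b c d) (h4 a' b' c' d') =
  h4 0 0 (2 * (b * d' - d * b')) (2 * (b * c' - c * b')).
Proof.
rewrite /h4br /h4mul !(h4_coord0, h4_coord1, h4_coord2, h4_coord3) h4N h4D.
by congr h4; ring.
Qed.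

Definition h4b a b c d : H4 K :=
  a *: h4one K + b *: h4g K + c *: h4e K + d *: h4f K.

End Coordinates.

Ltac h4_coords :=
  rewrite /h4b /h4e /h4f /h4one /h4g /h4x /h4gx ?(h4Z, h4N, h4D, h4br_h4);
  congr h4.

Section BasisCoordinates.
Variable K : fieldType.
Implicit Types a b c d : K.

Lemma h4br_h4b a b c d a' b' c' d' :
  h4br (h4b a b c d) (h4b a' b' c' d') =
  h4b 0 0 (2 * (b * c' - c * b')) (- 2 * (b * d' - d * b')).
Proof. by h4_coords; ring. Qed.

Lemma h4b_surj (char2 : (2%:R : K) != 0) (v : H4 K) :
  exists a b c d, v = h4b a b c d.
Proof.
exists (v 0 0), (v 0 1), ((v 0 2 + v 0 3) / 2), ((v 0 2 - v 0 3) / 2).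
by rewrite {1}(h4_eta v); h4_coords; field; exact: char2.
Qed.

End BasisCoordinates.

Section LieSubalgebras.
Variables (K : fieldType) (L : {vspace H4 K}).
Hypothesis char2 : (2%:R : K) != 0.
Implicit Types a b c d : K.

Lemma mem_h4b_g_monic a b c d :
  b != 0 -> h4b a b c d \in L -> h4b (a / b) 1 (c / b) (d / b) \in L.
Proof.
move=> b_neq0 vL; suff -> : h4b (a / b) 1 (c / b) (d / b) = b^-1 *: h4b a b c d.
  exact: memvZ.
by h4_coords; field.
Qed.

Lemma non_abelian_g_monic :
  non_abelian L -> exists a c d, h4b a 1 c d \in L.
Proof.
case=> u [v [uL vL]].
have [u0 [u1 [u2 [u3 eq_u]]]] := h4b_surj char2 u.
have [v0 [v1 [v2 [v3 eq_v]]]] := h4b_surj char2 v.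
have [u1_0 | u1_neq0] := eqVneq u1 0; last first.
  by move=> _; exists (u0 / u1), (u2 / u1), (u3 / u1); rewrite mem_h4b_g_monic -?eq_u.
have [v1_0 | v1_neq0] := eqVneq v1 0; last first.
  by move=> _; exists (v0 / v1), (v2 / v1), (v3 / v1); rewrite mem_h4b_g_monic -?eq_v.
suff -> : h4br u v = 0 by rewrite eqxx.
by rewrite eq_u eq_v h4br_h4b u1_0 v1_0 !(mul0r, mulr0, subr0) /h4b !scale0r !addr0.
Qed.

Lemma lie_ideal_mem_e_f a c d :
  lie_ideal L -> h4b a 1 c d \in L -> h4e K \in L /\ h4f K \in L.
Proof.
move=> idL wL; split.
  suff -> : h4e K = (- 2)^-1 *: h4br (h4e K) (h4b a 1 c d) by rewrite memvZ ?idL.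
  by h4_coords; field; rewrite oppr_eq0.
suff -> : h4f K = 2^-1 *: h4br (h4f K) (h4b a 1 c d) by rewrite memvZ ?idL.
by h4_coords; field.
Qed.

Hypothesis subL : lie_subalg L.

(* Applying ad w twice to u separates its e- and f-components:
   [w, u] = 2 c' e - 2 d' f and [w, [w, u]] = 4 c' e + 4 d' f. *)
Lemma lie_subalg_homogeneous a c d a' c' d' :
  h4b a 1 c d \in L -> h4b a' 0 c' d' \in L ->
  [/\ a' *: h4one K \in L, c' *: h4e K \in L & d' *: h4f K \in L].
Proof.
move=> wL uL; set w := h4b a 1 c d; set u := h4b a' 0 c' d'.
have wuL : h4br w u \in L by exact: subL.
have wwuL : h4br w (h4br w u) \in L by exact: subL.
have eight_neq0 : (8 : K) != 0.
  by rewrite -[8%:R]/((2 * 2 * 2)%:R) !natrM !mulf_neq0.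
have eL : c' *: h4e K \in L.
  suff -> : c' *: h4e K = 8^-1 *: (h4br w (h4br w u) + 2 *: h4br w u).
    by rewrite memvZ // memvD // memvZ.
  by rewrite /w /u; h4_coords; field; exact: eight_neq0.
have fL : d' *: h4f K \in L.
  suff -> : d' *: h4f K = 8^-1 *: (h4br w (h4br w u) - 2 *: h4br w u).
    by rewrite memvZ // memvB // memvZ.
  by rewrite /w /u; h4_coords; field; exact: eight_neq0.
split=> //; suff -> : a' *: h4one K = u - c' *: h4e K - d' *: h4f K.
  by rewrite !memvB.
by rewrite /u; h4_coords; ring.
Qed.

Lemma lie_subalg_span a c d : h4b a 1 c d \in L ->
  L = <<h4b a 1 c d :: [seq x <- [:: h4one K; h4e K; h4f K] | x \in L]>>%VS.
Proof.
move=> wL; apply/eqP; rewrite eqEsubv; apply/andP; split; last first.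
  by apply/span_subvP => x; rewrite inE mem_filter => /predU1P[-> | /andP[]].
apply/subvP => v vL; have [v0 [v1 [v2 [v3 eq_v]]]] := h4b_surj char2 v.
have split_v : v = v1 *: h4b a 1 c d
                  + h4b (v0 - v1 * a) 0 (v2 - v1 * c) (v3 - v1 * d).
  by rewrite eq_v; h4_coords; ring.
have /(lie_subalg_homogeneous wL)[oneL eL fL] :
    h4b (v0 - v1 * a) 0 (v2 - v1 * c) (v3 - v1 * d) \in L.
  by rewrite -(addKr (v1 *: h4b a 1 c d) (h4b _ 0 _ _)) -split_v memvD ?memvN ?memvZ.
rewrite split_v span_cons memv_add ?memvZ ?memv_line // /h4b scale0r addr0.
by rewrite !memvD // scale_mem_span_filter // !inE eqxx ?orbT.
Qed.

End LieSubalgebras.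

Lemma h4_span_full (K : fieldType) a c d : (2%:R : K) != 0 ->
  <<[:: h4b a 1 c d; h4one K; h4e K; h4f K]>>%VS = fullv.
Proof.
move=> char2; have full_subalg : lie_subalg (fullv : {vspace H4 K}).
  by move=> *; exact: memvf.
by rewrite [RHS](lie_subalg_span char2 full_subalg (memvf (h4b a 1 c d))) /= !memvf.
Qed.

Section NormalForms.
Variables (K : fieldType) (a c d : K).

Lemma span_h4b_e_f :
  <<[:: h4b a 1 c d; h4e K; h4f K]>>%VS =
  span3 (a *: h4one K + h4g K) (h4e K) (h4f K).
Proof.
rewrite /h4b scale1r -addrA span_cons_addr //.
by rewrite memv_span_comb2 // !inE eqxx ?orbT.
Qed.

Lemma span_h4b_one_e :
  <<[:: h4b a 1 c d; h4one K; h4e K]>>%VS =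
  span3 (h4one K) (h4g K + d *: h4f K) (h4e K).
Proof.
have -> : h4b a 1 c d = h4g K + d *: h4f K + (a *: h4one K + c *: h4e K).
  by h4_coords; ring.
rewrite span_cons_addr ?memv_span_comb2 ?inE ?eqxx ?orbT //.
by apply: eq_span => x; rewrite !inE orbCA.
Qed.

Lemma span_h4b_one_f :
  <<[:: h4b a 1 c d; h4one K; h4f K]>>%VS =
  span3 (h4one K) (h4g K + c *: h4e K) (h4f K).
Proof.
have -> : h4b a 1 c d = h4g K + c *: h4e K + (a *: h4one K + d *: h4f K).
  by h4_coords; ring.
rewrite span_cons_addr ?memv_span_comb2 ?inE ?eqxx ?orbT //.
by apply: eq_span => x; rewrite !inE orbCA.
Qed.

End NormalForms.

Theorem mainTheorem3 (K : fieldType) (char2 : (2%:R : K) != 0)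
  (L : {vspace H4 K}) :
  \dim L = 3%N -> lie_subalg L -> non_abelian L ->
  ((exists alpha : K,
       L = span3 (alpha *: h4one K + h4g K) (h4e K) (h4f K))
   \/ (exists gamma : K,
       L = span3 (h4one K) (h4g K + gamma *: h4e K) (h4f K))
   \/ (exists gamma : K,
       L = span3 (h4one K) (h4g K + gamma *: h4f K) (h4e K)))
  /\
  (lie_ideal L ->
     L = span3 (h4one K) (h4e K) (h4f K)
     \/ (exists alpha : K,
           L = span3 (alpha *: h4one K + h4g K) (h4e K) (h4f K))).
Proof.
move=> dimL subL /(non_abelian_g_monic char2)[a [c [d wL]]].
have ideal_ef idL := lie_ideal_mem_e_f char2 idL wL.
have eqL := lie_subalg_span char2 subL wL.
set S := [seq x <- _ | _] in eqL.
have size2 : (2 <= size S)%N.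
  by have := dim_span (h4b a 1 c d :: S); rewrite -eqL dimL.
move: eqL size2; rewrite /S /=.
case one_L: (h4one K \in L); case e_L: (h4e K \in L);
  case f_L: (h4f K \in L) => //= eqL _.
- by move: dimL; rewrite eqL h4_span_full // dimvf dim_matrix.
- split; last by case/ideal_ef => _; rewrite f_L.
  by right; right; exists d; rewrite eqL span_h4b_one_e.
- split; last by case/ideal_ef; rewrite e_L.
  by right; left; exists c; rewrite eqL span_h4b_one_f.
by split=> [|_]; [left | right]; exists a; rewrite eqL span_h4b_e_f.
Qed.
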